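(* There is an absolute constant $C_3$ such that for all $p\in(0,0.1)$, with $q=-\log(1-p)$ and $B=\lfloor q^{-1}\log q^{-1}\rfloor$, every positive integer $a\le B$ satisfies $$e^{2g(aq)}\le \frac{C_3}{aq}\log q^{-1}.$$
   Context: $\beta(u)=\frac{u+\sqrt{u(4-3u)}}{2}$ and $g(z)=-\log\beta(1-e^{-z})$ for $z>0$. *)

From Stdlib Require Import Reals ZArith.
Open Scope R_scope.

Definition beta (u : R) : R := (u + sqrt (u * (4 - 3 * u))) / 2.

Definition g (z : R) : R := - ln (beta (1 - exp (- z))).

(* floor of a real number: Int_part x = up x - 1 is the floor. *)
Definition floorR (x : R) : Z := Int_part x.

(* Since sqrt (u (4 - 3u)) >= sqrt u on (0, 1], beta u ^ 2 >= u / 4, so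
   exp (2 g z) = / beta (1 - e^{-z}) ^ 2 <= 4 / (1 - e^{-z}) <= 4 (1 + z) / z.
   For z = a q with 1 <= a <= B we have 0 < z <= log (1/q), and log (1/q) >= 1
   because q < 1/9; hence 4 (1 + z) / z <= 8 log (1/q) / z, i.e. C3 = 8 works. *)

From Stdlib Require Import Reals ZArith Lra Lia Psatz.
Open Scope R_scope.

Lemma ln_le_sub1 (x : R) : 0 < x -> ln x <= x - 1.
Proof.
  intros Hx. pose proof (exp_ineq1_le (ln x)) as H.
  rewrite exp_ln in H by exact Hx. lra.
Qed.

Lemma neg_ln_one_sub_pos (p : R) : 0 < p < 1 -> 0 < - ln (1 - p).
Proof.
  intros Hp. assert (H : ln (1 - p) < ln 1) by (apply ln_increasing; lra).
  rewrite ln_1 in H. lra.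
Qed.

Lemma neg_ln_one_sub_le (p : R) : p < 1 -> - ln (1 - p) <= p / (1 - p).
Proof.
  intros Hp. rewrite <- ln_Rinv by lra.
  replace (p / (1 - p)) with (/ (1 - p) - 1) by (field; lra).
  apply ln_le_sub1, Rinv_0_lt_compat. lra.
Qed.

Lemma one_le_ln_inv (q : R) : 0 < q -> 3 * q <= 1 -> 1 <= ln (/ q).
Proof.
  intros Hq H3. apply Rnot_lt_le. intros Hlt.
  assert (Hinv : / q < exp 1).
  { rewrite <- (exp_ln (/ q)) by (apply Rinv_0_lt_compat; lra).
    now apply exp_increasing. }
  assert (H1 : q * / q < q * exp 1) by (apply Rmult_lt_compat_l; lra).
  rewrite Rinv_r in H1 by lra.
  pose proof exp_le_3. nra.
Qed.

Lemma INR_le_floorR (n : nat) (x : R) : (Z.of_nat n <= floorR x)%Z -> INR n <= x.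
Proof.
  intros Hn. destruct (base_Int_part x) as [Hfloor _].
  rewrite INR_IZR_INZ. eapply Rle_trans; [apply IZR_le, Hn | exact Hfloor].
Qed.

Lemma beta_pos (u : R) : 0 < u <= 1 -> 0 < beta u.
Proof.
  intros Hu. unfold beta.
  assert (0 <= sqrt (u * (4 - 3 * u))) by apply sqrt_pos. lra.
Qed.

Lemma beta_sqr_ge (u : R) : 0 < u <= 1 -> u / 4 <= beta u ^ 2.
Proof.
  intros Hu. unfold beta.
  assert (Hs : sqrt u <= sqrt (u * (4 - 3 * u))) by (apply sqrt_le_1_alt; nra).
  assert (Hsq : sqrt u * sqrt u = u) by (apply sqrt_sqrt; lra).
  assert (0 <= sqrt u) by apply sqrt_pos.
  nra.
Qed.

Lemma one_sub_exp_opp_ge (z : R) : 0 <= z -> z / (1 + z) <= 1 - exp (- z).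
Proof.
  intros Hz. rewrite exp_Ropp.
  assert (/ exp z <= / (1 + z)) by (apply Rinv_le_contravar; [lra | apply exp_ineq1_le]).
  replace (z / (1 + z)) with (1 - / (1 + z)) by (field; lra). lra.
Qed.

Lemma one_sub_exp_opp_range (z : R) : 0 < z -> 0 < 1 - exp (- z) <= 1.
Proof.
  intros Hz. pose proof (one_sub_exp_opp_ge z) as Hge.
  assert (0 < z / (1 + z)) by (apply Rdiv_lt_0_compat; lra).
  pose proof (exp_pos (- z)). lra.
Qed.

Lemma exp_2g (z : R) : 0 < z -> exp (2 * g z) = / beta (1 - exp (- z)) ^ 2.
Proof.
  intros Hz. pose proof (beta_pos _ (one_sub_exp_opp_range z Hz)) as Hb.
  unfold g. set (b := beta (1 - exp (- z))) in *.
  replace (2 * - ln b) with (- (ln b + ln b)) by ring.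
  rewrite exp_Ropp, exp_plus, exp_ln by exact Hb. f_equal. ring.
Qed.

Lemma exp_2g_le (z : R) : 0 < z -> exp (2 * g z) <= 4 * (1 + z) / z.
Proof.
  intros Hz. rewrite exp_2g by exact Hz.
  pose proof (one_sub_exp_opp_range z Hz) as Hu.
  pose proof (one_sub_exp_opp_ge z (Rlt_le _ _ Hz)) as Hge.
  pose proof (beta_sqr_ge _ Hu) as Hsqr.
  assert (Hpos : 0 < z / (1 + z) / 4) by (apply Rdiv_lt_0_compat; [apply Rdiv_lt_0_compat |]; lra).
  replace (4 * (1 + z) / z) with (/ (z / (1 + z) / 4)) by (field; lra).
  apply Rinv_le_contravar; lra.
Qed.

Theorem lemma11 :
  exists C3 : R,
    forall p : R, 0 < p < 1 / 10 ->
      let q := - ln (1 - p) in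
      let B := floorR (/ q * ln (/ q)) in
      forall a : nat, (1 <= a)%nat -> (Z.of_nat a <= B)%Z ->
        exp (2 * g (INR a * q)) <= C3 / (INR a * q) * ln (/ q).
Proof.
  exists 8. intros p Hp q B a Ha HB.
  assert (Hq : 0 < q) by (apply neg_ln_one_sub_pos; lra).
  assert (Hq3 : 3 * q <= 1).
  { assert (q <= p / (1 - p)) by (apply neg_ln_one_sub_le; lra).
    assert (p / (1 - p) <= 1 / 3) by (apply Rmult_le_reg_r with (1 - p); field_simplify; lra).
    lra. }
  set (L := ln (/ q)) in *.
  assert (HL : 1 <= L) by (apply one_le_ln_inv; assumption).
  assert (Ha1 : 1 <= INR a) by (apply (le_INR 1); lia).
  set (z := INR a * q).
  assert (Hz : 0 < z) by (unfold z; nra).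
  assert (HzL : z <= L).
  { assert (INR a <= / q * L) by (apply INR_le_floorR; exact HB).
    unfold z. replace L with (/ q * L * q) by (field; lra). nra. }
  eapply Rle_trans; [apply exp_2g_le, Hz |].
  apply Rmult_le_reg_r with z; [exact Hz |].
  field_simplify; lra.
Qed.
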